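(* Let $k$ be a field of characteristic $0$ containing a primitive fifth root of unity, let $a,b\in k$ be such that the threefold $xu^2+2yuv+zv^2+2z^2u+2x^2v+ay^3+bxyz=0$ in $\mathbb{P}^4$ is smooth, and let $\mathcal{D}_{a,b}$ be the genus four curve with affine model $$(T_1-2)(T_1^2+T_1-1)^2+(a+b+4-10T_1+5T_1^3)w^2+(-2-b+5T_1)w^4=0,$$ with the degree four map $\mathcal{D}_{a,b}\to\mathbb{P}^1$, $(T_1,w)\mapsto T_1$. Assume this map is not a Galois cover and let $\widetilde{\mathcal{D}}_{a,b}\to\mathbb{P}^1$ be its Galois closure (normalization). Then the double cover $\widetilde{\mathcal{D}}_{a,b}\to\mathcal{D}_{a,b}$ is given by the function field extension $k(\widetilde{\mathcal{D}}_{a,b})=k(\mathcal{D}_{a,b})(t)$ with $$t^2=\frac{T_1-2}{5T_1-b-2}.$$ *)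

From HB Require Import structures.
From mathcomp Require Import all_boot all_order all_algebra all_fingroup all_field.
From mathcomp Require Import fraction.
From mathcomp Require Import mpoly.
Set Implicit Arguments. Unset Strict Implicit. Unset Printing Implicit Defensive.
Import GRing.Theory.
Local Open Scope ring_scope.

Section Defs.
Variable k : fieldType.

Definition ix : 'I_5 := @Ordinal 5 0 isT.
Definition iy : 'I_5 := @Ordinal 5 1 isT.
Definition iz : 'I_5 := @Ordinal 5 2 isT.
Definition iu : 'I_5 := @Ordinal 5 3 isT.
Definition iv : 'I_5 := @Ordinal 5 4 isT.

Definition cubic3fold (a b : k) : mpoly.mpoly 5 k :=
  let x := mpoly.mpolyX k (mpoly.mnm1 ix) in
  let y := mpoly.mpolyX k (mpoly.mnm1 iy) in
  let z := mpoly.mpolyX k (mpoly.mnm1 iz) in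
  let u := mpoly.mpolyX k (mpoly.mnm1 iu) in
  let v := mpoly.mpolyX k (mpoly.mnm1 iv) in
  x * u ^+ 2 + 2%:R * y * u * v + z * v ^+ 2 + 2%:R * z ^+ 2 * u
  + 2%:R * x ^+ 2 * v + mpoly.mpolyC 5 a * y ^+ 3 + mpoly.mpolyC 5 b * x * y * z.

(* A projective hypersurface {G = 0} in P^n (G homogeneous) is smooth when,
   over an algebraic closure (equivalently: over every algebraically closed
   field containing k), it has no point at which all partial derivatives
   of G vanish. *)
Definition smooth_proj_hypersurface (n : nat) (G : mpoly.mpoly n k) : Prop :=
  forall (C : closedFieldType) (f : {rmorphism k -> C}) (p : 'I_n -> C),
    (exists i, p i != 0) ->
    mpoly.meval p (mpoly.map_mpoly f G) = 0 ->
    exists i : 'I_n, mpoly.meval p (mpoly.map_mpoly f (mpoly.mderiv i G)) != 0.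

Definition KT := {fraction {poly k}}.
Definition T1 : KT := tofrac ('X : {poly k}).
Definition cst (c : k) : KT := tofrac (c%:P).

Definition Dpoly (a b : k) : {poly KT} :=
  ((T1 - 2%:R) * (T1 ^+ 2 + T1 - 1) ^+ 2)%:P
  + (cst a + cst b + 4%:R - 10%:R * T1 + 5%:R * T1 ^+ 3)%:P * 'X ^+ 2
  + (- 2%:R - cst b + 5%:R * T1)%:P * 'X ^+ 4.

Definition tsq (b : k) : KT := (T1 - 2%:R) / (5%:R * T1 - cst b - 2%:R).

End Defs.

From HB Require Import structures.
From mathcomp Require Import all_boot all_order all_algebra all_fingroup all_field.
From mathcomp Require Import fraction.
From mathcomp Require Import mpoly.
From mathcomp Require Import ring.
Set Implicit Arguments. Unset Strict Implicit. Unset Printing Implicit Defensive.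
Import GRing.Theory.
Local Open Scope ring_scope.

(* The quartic defining D_{a,b} is biquadratic: c0 + c2 w^2 + c4 w^4. If w is
   one root, a conjugate r not in k(D) = k(T1, w) exists because k(T1, w) is
   not Galois, and r <> -w.  The roots are then +-w, +-r, so the Galois closure
   is k(T1, w, r), and Vieta gives (w r)^2 = c0 / c4.  Since
   c0 / c4 = (T1 - 2) Q^2 / (5 T1 - b - 2) with Q = T1^2 + T1 - 1, the element
   t = w r / Q generates the same extension of k(T1, w) as r, and
   t^2 = (T1 - 2) / (5 T1 - b - 2). *)

Definition biquad (R : nzRingType) (c0 c2 c4 : R) : {poly R} :=
  c0%:P + c2%:P * 'X^2 + c4%:P * 'X^4.

Lemma map_biquad (R S : nzRingType) (f : {rmorphism R -> S}) (c0 c2 c4 : R) :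
  map_poly f (biquad c0 c2 c4) = biquad (f c0) (f c2) (f c4).
Proof. by rewrite /biquad !(rmorphD, rmorphM, rmorphXn) /= !map_polyC map_polyX. Qed.

Lemma root_biquad (R : comNzRingType) (c0 c2 c4 x : R) :
  root (biquad c0 c2 c4) x = (c0 + c2 * x ^+ 2 + c4 * x ^+ 4 == 0).
Proof. by rewrite /root /biquad !hornerE. Qed.

Lemma biquad_vieta (F : fieldType) (c0 c2 c4 w r : F) :
  c4 != 0 -> w ^+ 2 != r ^+ 2 ->
  root (biquad c0 c2 c4) w -> root (biquad c0 c2 c4) r ->
  c2 = - (c4 * (w ^+ 2 + r ^+ 2)) /\ c0 = c4 * (w * r) ^+ 2.
Proof.
move=> c4n0 wr2 /[!root_biquad] /eqP rw /eqP rr.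
have : (w ^+ 2 - r ^+ 2) * (c2 + c4 * (w ^+ 2 + r ^+ 2)) = 0.
  by rewrite -[RHS](subrr 0) -{1}rw -rr; ring.
move/eqP; rewrite mulf_eq0 subr_eq0 (negbTE wr2) /= addr_eq0 => /eqP c2E.
split=> //; apply/eqP; rewrite -subr_eq0 -rw c2E; apply/eqP; ring.
Qed.

Lemma biquad_factor (F : fieldType) (c0 c2 c4 w r : F) :
  c4 != 0 -> w ^+ 2 != r ^+ 2 ->
  root (biquad c0 c2 c4) w -> root (biquad c0 c2 c4) r ->
  biquad c0 c2 c4 = c4 *: \prod_(z <- [:: w; - w; r; - r]) ('X - z%:P).
Proof.
move=> c4n0 wr2 rw rr; have [-> ->] := biquad_vieta c4n0 wr2 rw rr.
rewrite /biquad !big_cons big_nil -mul_polyC.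
by rewrite !(rmorphM, rmorphN, rmorphD, rmorphXn) /=; ring.
Qed.

Lemma adjoin_mull (F : fieldType) (L : fieldExtType F) (E : {subfield L}) (x y : L) :
  x \in E -> x != 0 -> <<E; x * y>>%VS = <<E; y>>%VS.
Proof.
move=> xE xn0; have xE' (z : L) : x \in <<E; z>>%VS by apply: subvP_adjoin.
apply/eqP; rewrite eqEsubv; apply/andP; split; apply/FadjoinP;
  split; rewrite ?subv_adjoin //.
  by rewrite memvM ?xE' ?memv_adjoin.
by rewrite -{1}(mulKf xn0 y) memvM ?memvV ?xE' ?memv_adjoin.
Qed.

Section GaloisClosure.
Variables (F : fieldType) (L : splittingFieldType F) (K : {subfield L}).
Hypothesis galL : galois K fullv.

Lemma galois_adjoin_roots (p : {poly L}) (rs : seq L) :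
  p \is a polyOver K -> p %= \prod_(z <- rs) ('X - z%:P) -> galois K <<K & rs>>.
Proof.
move=> pK prs; have /and3P[_ sepL _] := galL.
rewrite /galois subv_adjoin_seq (separableSr (subvf _) sepL) /=.
apply/splitting_normalField; first exact: subv_adjoin_seq.
by exists p => //; exists rs.
Qed.

Lemma exists_root_notin_adjoin (p : {poly L}) (w : L) :
  p \is a polyOver K -> root p w -> ~~ galois K <<K; w>> ->
  exists2 r, root p r & r \notin <<K; w>>%VS.
Proof.
move=> pK pw notgal.
have [rs _ minE] := normalFieldP (normalFieldf K) w (memvf w).
have wrs : w \in rs by rewrite -root_prod_XsubC -minE root_minPoly.
have [rsw | /allPn[r rsr rw]] := boolP (all (mem <<K; w>>%VS) rs).
  case/negP: notgal; suff <- : <<K & rs>>%VS = <<K; w>>%VS.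
    by apply: (galois_adjoin_roots (minPolyOver K w)); rewrite minE eqpxx.
  apply/eqP; rewrite eqEsubv; apply/andP; split.
    by apply/Fadjoin_seqP; split; [exact: subv_adjoin | exact/allP].
  by apply/FadjoinP; split; [exact: subv_adjoin_seq | exact: seqv_sub_adjoin].
exists r => //; apply: root_dvdp (minPoly_dvdp pK pw) _.
by rewrite minE root_prod_XsubC.
Qed.

Lemma biquad_galois_closure (c0 c2 c4 w : L) :
  c0 \in K -> c2 \in K -> c4 \in K -> c4 != 0 ->
  root (biquad c0 c2 c4) w -> ~~ galois K <<K; w>> ->
  (forall M : {subfield L},
      (<<K; w>> <= M)%VS -> galois K M -> (M : {vspace L}) = fullv) ->
  exists r, [/\ c0 = c4 * (w * r) ^+ 2, <<<<K; w>>; r>>%VS = fullv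
              & r \notin <<K; w>>%VS].
Proof.
move=> c0K c2K c4K c4n0 pw notgal closure.
have pK : biquad c0 c2 c4 \is a polyOver K.
  by rewrite !(rpredD, rpredM, rpredX) ?polyOverC ?polyOverX.
have [r pr rw] := exists_root_notin_adjoin pK pw notgal.
have wE : w \in <<K; w>>%VS := memv_adjoin K w.
have wr2 : w ^+ 2 != r ^+ 2.
  rewrite eqf_sqr; apply/norP; split; apply: contraNneq rw => wrE.
    by rewrite -wrE.
  by rewrite -[r]opprK -wrE rpredN.
exists r; split=> //; first by have [] := biquad_vieta c4n0 wr2 pw pr.
set roots := [:: w; - w; r; - r].
have galM : galois K <<K & roots>>.
  apply: (galois_adjoin_roots pK).
  by rewrite (biquad_factor c4n0 wr2 pw pr) eqp_scale.
have sub_roots : {subset roots <= <<K & roots>>%VS} := @seqv_sub_adjoin _ _ K roots.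
have Kw_roots : (<<K; w>> <= <<K & roots>>)%VS.
  by apply/FadjoinP; split; [exact: subv_adjoin_seq | rewrite sub_roots ?mem_head].
have <- : <<K & roots>>%VS = fullv by apply: closure Kw_roots galM.
apply/eqP; rewrite eqEsubv; apply/andP; split.
  by apply/FadjoinP; split; last by rewrite sub_roots // !inE eqxx !orbT.
apply/Fadjoin_seqP; split.
  exact: subv_trans (subv_adjoin _ _) (subv_adjoin _ _).
have [wE' rE'] := (subvP_adjoin r wE, memv_adjoin <<K; w>>%VS r).
by move=> x; rewrite !inE => /or4P[]/eqP->; rewrite ?rpredN.
Qed.

End GaloisClosure.

Lemma tofrac_neq0 (R : idomainType) (p : {poly R}) (i : nat) :
  p`_i != 0 -> tofrac p != 0.
Proof. by apply: contraNneq => /eqP; rewrite tofrac_eq0 => /eqP ->; rewrite coef0. Qed.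

Section CurveCoefficients.
Variables (k : fieldType) (a b : k).
Hypothesis char0 : [pchar k] =i pred0.

Definition DQ : KT k := T1 k ^+ 2 + T1 k - 1.
Definition Dc0 : KT k := (T1 k - 2%:R) * DQ ^+ 2.
Definition Dc2 : KT k := cst a + cst b + 4%:R - 10%:R * T1 k + 5%:R * T1 k ^+ 3.
Definition Dc4 : KT k := - 2%:R - cst b + 5%:R * T1 k.

Lemma DpolyE : Dpoly a b = biquad Dc0 Dc2 Dc4.
Proof. by []. Qed.

Lemma DQ_neq0 : DQ != 0.
Proof.
have -> : DQ = tofrac ('X ^+ 2 + 'X - 1 : {poly k}).
  by rewrite /DQ /T1 tofracB tofracD tofracXn tofrac1.
by apply: (@tofrac_neq0 _ _ 2); rewrite !coefE /= addr0 subr0 oner_eq0.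
Qed.

Lemma Dc0_neq0 : Dc0 != 0.
Proof.
apply: mulf_neq0; last exact: expf_neq0 DQ_neq0.
have -> : T1 k - 2%:R = tofrac ('X - 2%:R : {poly k}).
  by rewrite /T1 tofracB rmorph_nat.
by apply: (@tofrac_neq0 _ _ 1); rewrite !coefE /= mul0rn subr0 oner_eq0.
Qed.

Lemma Dc4_neq0 : Dc4 != 0.
Proof.
have -> : Dc4 = tofrac (- 2%:R - b%:P + 5%:R * 'X : {poly k}).
  by rewrite /Dc4 /T1 /cst tofracD tofracB tofracN tofracM !rmorph_nat.
apply: (@tofrac_neq0 _ _ 1).
by rewrite !coefE /= mul0rn !oppr0 !add0r ((pcharf0P k).1 char0).
Qed.

Lemma tsqE : tsq b = Dc0 / (Dc4 * DQ ^+ 2).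
Proof.
rewrite /tsq /Dc0 invfM mulrA mulrAC mulfK ?expf_neq0 ?DQ_neq0 //.
by congr (_ / _); rewrite /Dc4 addrC addrA addrAC.
Qed.

End CurveCoefficients.

Theorem proposition3p5 (k : fieldType) (a b : k)
  (char0 : [pchar k] =i pred0)
  (zeta5 : exists z : k, 5.-primitive_root z)
  (smooth : smooth_proj_hypersurface (cubic3fold a b))
  (Dirr : irreducible_poly (Dpoly a b))
  (L : splittingFieldType (KT k)) (w : L)
  (w_root : root (map_poly (in_alg L) (Dpoly a b)) w)
  (notGalois : ~~ galois 1%VS <<1%VS; w>>%VS)
  (L_galois : galois 1%VS (fullv : {vspace L}))
  (L_minimal : forall M : {subfield L},
      (<<1%VS; w>> <= M)%VS -> galois 1%VS M -> (M : {vspace L}) = fullv) :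
  exists t : L,
    [/\ t ^+ 2 = in_alg L (tsq b),
        <<<<1%VS; w>>%VS; t>>%VS = fullv
      & t \notin <<1%VS; w>>%VS].
Proof.
have inK (x : KT k) : in_alg L x \in (1%AS : {subfield L}) by rewrite memvZ ?mem1v.
have c4n0 : in_alg L (Dc4 b) != 0 by rewrite fmorph_eq0 Dc4_neq0.
rewrite DpolyE map_biquad in w_root.
have [r [c0E fullE rw]] :=
  biquad_galois_closure L_galois (inK _) (inK _) (inK _) c4n0 w_root notGalois L_minimal.
have tsqE' : in_alg L (tsq b)
    = in_alg L (Dc0 k) / (in_alg L (Dc4 b) * in_alg L (DQ k) ^+ 2).
  (* Generalizing keeps rmorphM from unfolding Dc0 into its factors. *)
  by rewrite tsqE; move: (Dc0 k) (Dc4 b) (DQ k) => *; rewrite fmorph_div rmorphM rmorphXn.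
have wn0 : w != 0.
  have c0n0 : in_alg L (Dc0 k) != 0 by rewrite fmorph_eq0 Dc0_neq0.
  by apply: contraNneq c0n0 => w0; rewrite c0E w0 mul0r expr0n mulr0.
set q := in_alg L (DQ k) in tsqE' *.
have qn0 : q != 0 by rewrite fmorph_eq0 DQ_neq0.
have wqE : w / q \in <<1%VS; w>>%VS.
  by rewrite fpred_divr ?memv_adjoin //; apply/subvP_adjoin/inK.
have wqn0 : w / q != 0 by rewrite mulf_neq0 ?invr_eq0.
exists (w / q * r); split.
- by rewrite tsqE' c0E; field; rewrite c4n0 qn0.
- by rewrite adjoin_mull.
- by rewrite fpredMl.
Qed.
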